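(* If $1 \leq i \neq j \leq r$, then for any $l \geq 1$ the graph $\mathcal{H}(V_i,V_j)$ contains no copy of $K_{2,2l^2 - l + 1}$.
   Context: Let $r \geq 2$ and $l \geq 1$ be integers and $q$ a power of an odd prime. Let $\alpha_1, \dots, \alpha_r$ be distinct elements of $\mathbb{F}_q$, and let $m_1, \dots, m_l$ be distinct elements of $\mathbb{F}_q^* = \mathbb{F}_q\setminus\{0\}$ such that $m_s(\alpha_k - \alpha_i) \neq m_t(\alpha_k - \alpha_j)$ whenever $1 \leq s,t \leq l$ and $i,j,k$ are distinct integers in $\{1,\dots,r\}$. For $1 \leq i \leq r$ let $V_i = \mathbb{F}_q \times \mathbb{F}_q \times \{i\}$. For $x,y \in \mathbb{F}_q$, $a \in \mathbb{F}_q^*$, $s \in \{1,\dots,l\}$ let \[ e(x,y,a,m_s) = \{(x + \alpha_i m_s a,\; y + \alpha_i m_s a^2,\; i) : 1 \leq i \leq r\}. \] $\mathcal{H}$ is the $r$-uniform hypergraph with vertex set $V_1 \cup \dots \cup V_r$ and edge set $\{e(x,y,a,m_s) : x,y \in \mathbb{F}_q,\ a \in \mathbb{F}_q^*,\ 1 \leq s \leq l\}$. For $i \neq j$, $\mathcal{H}(V_i,V_j)$ is the bipartite graph with parts $V_i$ and $V_j$ in which $u \in V_i$ and $w \in V_j$ are adjacent iff $\{u,w\} \subseteq e$ for some edge $e$ of $\mathcal{H}$. *)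

From HB Require Import structures.
From mathcomp Require Import all_boot all_order all_algebra all_field.
Set Implicit Arguments. Unset Strict Implicit. Unset Printing Implicit Defensive.
Import GRing.Theory.
Local Open Scope ring_scope.

(* Vertices of H: V_1 u ... u V_r  =  F_q x F_q x {1..r}  (indices 0-based as 'I_r). *)
Definition vtx (F : finFieldType) (r : nat) := (F * F * 'I_r)%type.

Definition hedge (F : finFieldType) (r l : nat) (alpha : 'I_r -> F) (m : 'I_l -> F)
  (x y a : F) (s : 'I_l) : {set vtx F r} :=
  [set (x + alpha k * m s * a, y + alpha k * m s * a ^+ 2, k) | k : 'I_r].

Definition Hadj_dir (F : finFieldType) (r l : nat) (alpha : 'I_r -> F) (m : 'I_l -> F)
  (i j : 'I_r) (u w : vtx F r) : bool :=
  [&& u.2 == i, w.2 == j &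
   [exists x : F, exists y : F, exists a : F, exists s : 'I_l,
      [&& a != 0, u \in hedge alpha m x y a s & w \in hedge alpha m x y a s]]].

Definition HVij (F : finFieldType) (r l : nat) (alpha : 'I_r -> F) (m : 'I_l -> F)
  (i j : 'I_r) (u w : vtx F r) : bool :=
  Hadj_dir alpha m i j u w || Hadj_dir alpha m i j w u.

Definition contains_K2t (T : finType) (G : rel T) (t : nat) : Prop :=
  exists u1 u2 : T, exists S : {set T},
    [/\ u1 != u2, #|S| = t, u1 \notin S, u2 \notin S &
        forall w, w \in S -> G u1 w && G u2 w].

From HB Require Import structures.
From mathcomp Require Import all_boot all_order all_algebra all_field.
From mathcomp Require Import zify ring.

(* The two vertices u1, u2 of a K_{2,t} in H(V_i, V_j) lie in the same part,
   say V_k, and all their common neighbours lie in the other part V_k'.  With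
   d = alpha_k' - alpha_k, the neighbours in V_k' of (P, k) are the points of
   the parabolas P + d m_s (b, b^2).  A common neighbour therefore lies on
   P1 + d m_s (b, b^2) and on P2 + d m_t (b, b^2) for some pair (s, t), and
   two such parabolas with distinct apexes P1 != P2 meet in at most two points,
   and in at most one when s = t, as their intersection is cut out by a
   nonzero polynomial of degree at most 2, resp. 1.  Summing over the l^2
   pairs gives at most 2 l^2 - l common neighbours. *)

Set Implicit Arguments.
Unset Strict Implicit.
Unset Printing Implicit Defensive.

Import GRing.Theory.
Local Open Scope ring_scope.

Lemma odd_card_two_neq0 (F : finFieldType) : odd #|F| -> (2 : F) != 0.
Proof.
move=> oddF; apply/negP => /eqP two0.
have char2 : (2%N \in [pchar F]) by rewrite inE /= two0 eqxx.
have /= cardF := card_pprimeChar char2.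
move: oddF (finNzRing_gt1 F); rewrite cardF.
by case: (logn _ _) => [|n] //; rewrite expnS oddM.
Qed.

Lemma leq_card_bigcup (T I : finType) (A : I -> {set T}) :
  (#|\bigcup_(i : I) A i| <= \sum_(i : I) #|A i|)%N.
Proof.
elim/big_rec2: _ => [|i n U _ IH]; first by rewrite cards0.
by rewrite (leq_trans (leq_card_setU _ _)) ?leq_add2l.
Qed.

Lemma sum_one_on_diag_two_off (l : nat) :
  (\sum_(st : 'I_l * 'I_l) (if st.1 == st.2 then 1 else 2) = 2 * l ^ 2 - l)%N.
Proof.
have row s : (\sum_(t < l) (if s == t then 1 else 2) = (2 * l).-1)%N.
  rewrite (bigD1 s) //= eqxx (eq_bigr (fun=> 2%N)) => [|t]; last first.
    by rewrite eq_sym => /negbTE ->.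
  rewrite sum_nat_const cardC1 card_ord.
  by case: l s => [[]|l] //= _; lia.
rewrite -(pair_bigA _ (fun s t => if s == t then 1 else 2)%N) /=.
rewrite (eq_bigr _ (fun s _ => row s)) sum_nat_const card_ord.
by clear row; nia.
Qed.

Lemma eq_in_pair_of_neq (T : eqType) (i j a b c : T) :
  a \in [:: i; j] -> b \in [:: i; j] -> c \in [:: i; j] -> a != c -> b != c -> a = b.
Proof. by rewrite !inE => /pred2P[]-> /pred2P[]-> /pred2P[]->; rewrite ?eqxx. Qed.

Lemma card_roots_lt_size (F : finFieldType) (p : {poly F}) :
  p != 0 -> (#|[set a | root p a]| < size p)%N.
Proof.
move=> p_neq0; rewrite cardE max_poly_roots ?enum_uniq //.
by apply/allP => a; rewrite mem_enum inE.
Qed.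

Section Parabolas.

Variable F : finFieldType.

Definition parabola (P : F * F) (c : F) : {set F * F} :=
  [set (P.1 + c * b, P.2 + c * b ^+ 2) | b : F].

Lemma parabola_eq P c w : w \in parabola P c -> (w.1 - P.1) ^+ 2 = c * (w.2 - P.2).
Proof. by case/imsetP => b _ -> /=; ring. Qed.

(* [a] is a root iff the point of [parabola P c] with parameter [a] lies on
   [parabola Q d], by [parabola_eq]. *)
Definition parabola_meet_poly P Q c d : {poly F} :=
  Poly [:: (P.1 - Q.1) ^+ 2 - d * (P.2 - Q.2); 2 * c * (P.1 - Q.1); c ^+ 2 - d * c].

Lemma parabola_meet_polyE P Q c d a :
  (parabola_meet_poly P Q c d).[a] =
    (P.1 + c * a - Q.1) ^+ 2 - d * (P.2 + c * a ^+ 2 - Q.2).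
Proof. by rewrite horner_Poly /=; ring. Qed.

Lemma parabola_meet_poly_neq0 P Q c d : (2 : F) != 0 -> P != Q -> c != 0 -> d != 0 ->
  parabola_meet_poly P Q c d != 0.
Proof.
move=> two_neq0 PQ c_neq0 d_neq0; apply: contraNneq PQ => q0.
have /eqP : (parabola_meet_poly P Q c d)`_1 = 0 by rewrite q0 coef0.
rewrite coef_Poly /= !mulf_eq0 (negbTE two_neq0) (negbTE c_neq0) /= => /eqP x0.
have /eqP : (parabola_meet_poly P Q c d)`_0 = 0 by rewrite q0 coef0.
rewrite coef_Poly /= x0 expr0n sub0r oppr_eq0 mulf_eq0 (negbTE d_neq0) /= => y0.
apply/eqP; rewrite [P]surjective_pairing [Q]surjective_pairing.
by congr (_, _); apply/eqP; rewrite -subr_eq0 ?x0 ?y0.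
Qed.

Lemma size_parabola_meet_poly P Q c d :
  (size (parabola_meet_poly P Q c d) <= (if c == d then 2 else 3))%N.
Proof.
case: eqP => [<-|_]; last exact: size_Poly.
rewrite /parabola_meet_poly (_ : c ^+ 2 - c * c = 0); last by ring.
rewrite /= !cons_poly_def polyC0 !(mul0r, add0r) size_MXaddC size_polyC.
by case: ifP => // _; case: (_ != 0).
Qed.

Lemma card_parabolaI P Q c d : (2 : F) != 0 -> P != Q -> c != 0 -> d != 0 ->
  (#|parabola P c :&: parabola Q d| <= (if c == d then 1 else 2))%N.
Proof.
move=> two_neq0 PQ c_neq0 d_neq0.
have PcQd_sub : parabola P c :&: parabola Q d \subset
    [set (P.1 + c * a, P.2 + c * a ^+ 2) | a in [set a | root (parabola_meet_poly P Q c d) a]].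
  apply/subsetP => _ /setIP[/imsetP[a _ ->] /parabola_eq aQ].
  by apply/imsetP; exists a; rewrite // inE /root parabola_meet_polyE -aQ subrr.
rewrite (leq_trans (subset_leq_card PcQd_sub)) // (leq_trans (leq_imset_card _ _)) //.
have := card_roots_lt_size (parabola_meet_poly_neq0 two_neq0 PQ c_neq0 d_neq0).
by have := size_parabola_meet_poly P Q c d; case: (c == d); lia.
Qed.

End Parabolas.

Section Neighbourhoods.

Variables (F : finFieldType) (r l : nat) (alpha : 'I_r -> F) (m : 'I_l -> F).
Variables (i j : 'I_r).
Hypothesis neq_ij : i != j.

Lemma HVij_parabola u w : HVij alpha m i j u w ->
  [/\ u.2 \in [:: i; j], w.2 \in [:: i; j], u.2 != w.2 &
      exists s, w.1 \in parabola u.1 ((alpha w.2 - alpha u.2) * m s)].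
Proof.
have edge_parabola k k' x y a s : (x + alpha k' * m s * a, y + alpha k' * m s * a ^+ 2)
    \in parabola (x + alpha k * m s * a, y + alpha k * m s * a ^+ 2) ((alpha k' - alpha k) * m s).
  by apply/imsetP; exists a => //=; congr (_, _); ring.
rewrite /HVij /Hadj_dir; case/orP => /and3P[/eqP u_i /eqP w_j /existsP[x /existsP[y
  /existsP[a /existsP[s /and3P[_ /imsetP[k _ def1] /imsetP[k' _ def2]]]]]]];
  subst u w; rewrite /= in u_i w_j *; subst k k';
  by split; rewrite ?inE ?eqxx ?orbT ?(eq_sym j) //; exists s; apply: edge_parabola.
Qed.

End Neighbourhoods.

Theorem lemma3p8 (F : finFieldType) (r l : nat)
  (alpha : 'I_r -> F) (m : 'I_l -> F) :
  odd #|F| ->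
  (2 <= r)%N -> (1 <= l)%N ->
  injective alpha ->
  injective m ->
  (forall s : 'I_l, m s != 0) ->
  (forall (s t : 'I_l) (i j k : 'I_r), i != j -> j != k -> i != k ->
     m s * (alpha k - alpha i) != m t * (alpha k - alpha j)) ->
  forall i j : 'I_r, i != j ->
  ~ contains_K2t (HVij alpha m i j) (2 * l ^ 2 - l + 1)%N.
Proof.
move=> oddF _ _ alpha_inj _ m_neq0 _ i j neq_ij [u1 [u2 [S [neq_u12 cardS _ _ adjS]]]].
have [w0 w0S] : exists w0, w0 \in S by apply/card_gt0P; rewrite cardS addn1.
have /andP[/(HVij_parabola neq_ij)[u1_ij w0_ij u1w0 _]
           /(HVij_parabola neq_ij)[u2_ij _ u2w0 _]] := adjS w0 w0S.
have u21 : u2.2 = u1.2 := eq_in_pair_of_neq u2_ij u1_ij w0_ij u2w0 u1w0.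
set k := w0.2 in w0_ij u1w0 *; set d := alpha k - alpha u1.2.
have d_neq0 : d != 0 by rewrite subr_eq0 (inj_eq alpha_inj) eq_sym.
have neq_P12 : u1.1 != u2.1.
  apply: contraNneq neq_u12 => eq_P12.
  by rewrite [u1]surjective_pairing [u2]surjective_pairing eq_P12 u21.
pose U := \bigcup_(st : 'I_l * 'I_l)
  (parabola u1.1 (d * m st.1) :&: parabola u2.1 (d * m st.2)).
have S_sub : S \subset [set (P, k) | P in U].
  apply/subsetP => w wS; have /andP[adj1 adj2] := adjS w wS.
  have [_ w_ij u1w [s Ps]] := HVij_parabola neq_ij adj1.
  have [_ _ _ [t Pt]] := HVij_parabola neq_ij adj2.
  have wk : w.2 = k by apply: eq_in_pair_of_neq w_ij w0_ij u1_ij _ _; rewrite eq_sym.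
  apply/imsetP; exists w.1; last by rewrite -wk -surjective_pairing.
  rewrite wk in Ps; rewrite u21 wk in Pt.
  by apply/bigcupP; exists (s, t); rewrite // inE Ps Pt.
have : (#|S| <= 2 * l ^ 2 - l)%N.
  rewrite (leq_trans (subset_leq_card S_sub)) // (leq_trans (leq_imset_card _ _)) //.
  rewrite (leq_trans (leq_card_bigcup _)) // -sum_one_on_diag_two_off leq_sum // => -[s t] _.
  rewrite (leq_trans (card_parabolaI _ _ _ _)) ?mulf_neq0 ?odd_card_two_neq0 //=.
  by case: (eqVneq s t) => [->|_]; rewrite ?eqxx //; case: ifP.
by rewrite cardS addn1 ltnn.
Qed.
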